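(* Let $f\colon E\to B$ be a uniformly expansive, homogeneous map of metric spaces. Assume that $B$ has straight finite decomposition complexity and that there exists $b_0\in B$ such that for each $r>0$ the space $f^{-1}(B_r(b_0))$ has straight finite decomposition complexity. Then $E$ has straight finite decomposition complexity. In particular, straight finite decomposition complexity satisfies the Homogeneous Fibering Theorem: if $f\colon E\to B$ is uniformly expansive and homogeneous, $B$ has sFDC, and $f^{-1}(D)$ has sFDC for every bounded $D\subset B$, then $E$ has sFDC.
   Context: $B_r(b_0)$ is the ball of radius $r$ about $b_0$. A map $f\colon X\to Y$ is uniformly expansive if there is a nondecreasing $\rho\colon[0,\infty)\to[0,\infty)$ with $d_Y(f(x),f(x'))\le\rho(d_X(x,x'))$ for all $x,x'$. It is homogeneous if for all $y_1,y_2\in f(X)$ there exist isometries $\phi\colon X\to X$, $\bar\phi\colon Y\to Y$ with $f\circ\phi=\bar\phi\circ f$ and $\bar\phi(y_1)=y_2$. A metric family is a set of metric spaces; it is uniformly bounded if the diameters of its members are uniformly bounded. An $r$-decomposition of a metric space $Z$ over a metric family $\mathcal{Y}$ is a decomposition $Z=Z_0\cup Z_1$ with each $Z_i=\bigsqcup_j Z_{ij}$ a union of pairwise $r$-disjoint subsets ($d(Z_{ij},Z_{ij'})>r$ for $j\neq j'$) and each $Z_{ij}\in\mathcal{Y}$; a family is $r$-decomposable over $\mathcal{Y}$ if each member admits an $r$-decomposition over $\mathcal{Y}$. A metric family $\mathcal{X}$ has straight finite decomposition complexity (sFDC) if for every sequence $R_1<R_2<\cdots$ of positive numbers there exist $n\in\mathbb{N}$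 and families $\mathcal{X}_0=\mathcal{X},\dots,\mathcal{X}_n$ with $\mathcal{X}_i$ $R_{i+1}$-decomposable over $\mathcal{X}_{i+1}$ for $i<n$ and $\mathcal{X}_n$ uniformly bounded. A metric space has sFDC if the family consisting of it alone does. *)

From Stdlib Require Import Reals.
Open Scope R_scope.

Definition is_metric {T : Type} (d : T -> T -> R) : Prop :=
  (forall x y, 0 <= d x y) /\
  (forall x y, d x y = 0 <-> x = y) /\
  (forall x y, d x y = d y x) /\
  (forall x y z, d x z <= d x y + d y z).

Definition ball {T : Type} (d : T -> T -> R) (b0 : T) (r : R) : T -> Prop :=
  fun b => d b0 b < r.

Definition preimage {A B : Type} (f : A -> B) (D : B -> Prop) : A -> Prop :=
  fun x => D (f x).

Definition bounded_set {T : Type} (d : T -> T -> R) (D : T -> Prop) : Prop :=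
  exists C, forall x y, D x -> D y -> d x y <= C.

Definition uniformly_expansive {X Y : Type} (dX : X -> X -> R) (dY : Y -> Y -> R)
  (f : X -> Y) : Prop :=
  exists rho : R -> R,
    (forall t, 0 <= t -> 0 <= rho t) /\
    (forall s t, 0 <= s -> s <= t -> rho s <= rho t) /\
    (forall x x', dY (f x) (f x') <= rho (dX x x')).

Definition isometry {X : Type} (d : X -> X -> R) (phi : X -> X) : Prop :=
  (forall x y, d (phi x) (phi y) = d x y) /\ (forall y, exists x, phi x = y).

Definition homogeneous {X Y : Type} (dX : X -> X -> R) (dY : Y -> Y -> R)
  (f : X -> Y) : Prop :=
  forall y1 y2 : Y, (exists x1, f x1 = y1) -> (exists x2, f x2 = y2) ->
    exists (phi : X -> X) (phib : Y -> Y),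
      isometry dX phi /\ isometry dY phib /\
      (forall x, f (phi x) = phib (f x)) /\ phib y1 = y2.

Definition family (T : Type) := (T -> Prop) -> Prop.

Definition uniformly_bounded {T : Type} (d : T -> T -> R) (F : family T) : Prop :=
  exists C, forall Y, F Y -> forall x y, Y x -> Y y -> d x y <= C.

(** d(A, B) > r, with the infimum convention d(A, B) = +oo when A or B is empty. *)
Definition r_disjoint {T : Type} (d : T -> T -> R) (r : R) (A B : T -> Prop) : Prop :=
  exists s, r < s /\ forall a b, A a -> B b -> s <= d a b.

Definition r_disjoint_union_over {T : Type} (d : T -> T -> R) (r : R)
  (Y : family T) (Zi : T -> Prop) (P : family T) : Prop :=
  (forall x, Zi x <-> exists A, P A /\ A x) /\
  (forall A, P A -> Y A) /\
  (forall A A', P A -> P A' -> A <> A' -> r_disjoint d r A A').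

Definition r_decomposition {T : Type} (d : T -> T -> R) (r : R)
  (Y : family T) (Z : T -> Prop) : Prop :=
  exists (Z0 Z1 : T -> Prop) (P0 P1 : family T),
    (forall x, Z x <-> Z0 x \/ Z1 x) /\
    r_disjoint_union_over d r Y Z0 P0 /\
    r_disjoint_union_over d r Y Z1 P1.

Definition r_decomposable {T : Type} (d : T -> T -> R) (r : R)
  (X Y : family T) : Prop :=
  forall Z, X Z -> r_decomposition d r Y Z.

(** Straight finite decomposition complexity; R_ i plays the role of R_{i+1}. *)
Definition sFDC_family {T : Type} (d : T -> T -> R) (X : family T) : Prop :=
  forall R_ : nat -> R, (forall i, 0 < R_ i) -> (forall i, R_ i < R_ (S i)) ->
  exists (n : nat) (F : nat -> family T),
    F 0%nat = X /\
    (forall i, (i < n)%nat -> r_decomposable d (R_ i) (F i) (F (S i))) /\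
    uniformly_bounded d (F n).

Definition sFDC_subspace {T : Type} (d : T -> T -> R) (S : T -> Prop) : Prop :=
  sFDC_family d (fun Z => Z = S).

Definition sFDC {T : Type} (d : T -> T -> R) : Prop :=
  sFDC_subspace d (fun _ => True).

(* Over a bounded piece D of B, homogeneity moves f^-1(D) isometrically into one fixed
   f^-1(B_r(b0)), because an isometry of B carrying a point of D to a fixed point of f(E)
   moves D into a ball of fixed radius; sFDC passes to such isometric copies, so every
   uniformly bounded family of fibres f^-1(D) has sFDC.  Decompositions of B pull back
   along f, with the radii enlarged by rho to keep preimages of separated sets separated.
   Running the decompositions of B first and then those of the resulting family of
   fibres gives a decomposition sequence for E. *)

From Pilot Require Import Defs.
From Stdlib Require Import Reals Lra Lia Classical FunctionalExtensionality PropExtensionality.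
Open Scope R_scope.

Definition distance_preserving {T : Type} (d : T -> T -> R) (g : T -> T) : Prop :=
  forall x y, d (g x) (g y) = d x y.

Definition isometric_copies {T : Type} (d : T -> T -> R) (Y : Defs.family T) : Defs.family T :=
  fun A' => exists A g, Y A /\ distance_preserving d g /\ (forall x, A' x -> A (g x)).

Definition trace_along {T : Type} (A' : T -> Prop) (g : T -> T) (P : Defs.family T)
  : Defs.family T :=
  fun B => exists C, P C /\ B = (fun x => A' x /\ C (g x)).

Definition preimage_family {E B : Type} (f : E -> B) (Y : Defs.family B) : Defs.family E :=
  fun Z => exists D, Y D /\ Z = preimage f D.

Definition admissible_radii (R_ : nat -> R) : Prop :=
  (forall i, 0 < R_ i) /\ (forall i, R_ i < R_ (S i)).

Lemma sFDC_familyP {T : Type} (d : T -> T -> R) (X : Defs.family T) :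
  sFDC_family d X <->
  forall R_, admissible_radii R_ ->
  exists n F, F 0%nat = X /\
    (forall i, (i < n)%nat -> r_decomposable d (R_ i) (F i) (F (S i))) /\
    uniformly_bounded d (F n).
Proof.
  split.
  - intros HX R_ [Hpos Hinc]. exact (HX R_ Hpos Hinc).
  - intros HX R_ Hpos Hinc. exact (HX R_ (conj Hpos Hinc)).
Qed.

Section IsometricCopies.

Variables (T : Type) (d : T -> T -> R).

Lemma r_disjoint_union_trace r Y Zi P (A' : T -> Prop) g :
  distance_preserving d g ->
  r_disjoint_union_over d r Y Zi P ->
  r_disjoint_union_over d r (isometric_copies d Y) (fun x => A' x /\ Zi (g x))
    (trace_along A' g P).
Proof.
  intros Hg [Hcover [Hpieces Hsep]]. split; [|split].
  - intros x; split.
    + intros [HA HZ]. apply Hcover in HZ. destruct HZ as [C [HC HCx]].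
      exists (fun x => A' x /\ C (g x)). split; [exists C; auto | auto].
    + intros [B [[C [HC ->]] [HA HCx]]]. split; auto. apply Hcover. exists C; auto.
  - intros B [C [HC ->]]. exists C, g. repeat split; auto. intros x [_ H]; exact H.
  - intros B B' [C [HC ->]] [C' [HC' ->]] Hne.
    assert (HCC' : C <> C') by (intro; subst; apply Hne; reflexivity).
    destruct (Hsep C C' HC HC' HCC') as [s [Hs Hs']].
    exists s; split; auto. intros a b [_ Ha] [_ Hb]. rewrite <- Hg. auto.
Qed.

Lemma r_decomposable_isometric_copies r Y Y' :
  r_decomposable d r Y Y' -> r_decomposable d r (isometric_copies d Y) (isometric_copies d Y').
Proof.
  intros Hdec A' [A [g [HA [Hg Hsub]]]].
  destruct (Hdec A HA) as [Z0 [Z1 [P0 [P1 [Hcover [H0 H1]]]]]].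
  exists (fun x => A' x /\ Z0 (g x)), (fun x => A' x /\ Z1 (g x)),
    (trace_along A' g P0), (trace_along A' g P1).
  split; [|split; apply r_disjoint_union_trace; auto].
  intros x; split.
  - intros Hx. pose proof (proj1 (Hcover (g x)) (Hsub x Hx)). tauto.
  - intros [[Hx _]|[Hx _]]; exact Hx.
Qed.

Lemma uniformly_bounded_isometric_copies Y :
  uniformly_bounded d Y -> uniformly_bounded d (isometric_copies d Y).
Proof.
  intros [C HC]. exists C. intros A' [A [g [HA [Hg Hsub]]]] x y Hx Hy.
  rewrite <- Hg. apply (HC A); auto.
Qed.

Lemma sFDC_family_isometric_copies X X' :
  sFDC_family d X -> (forall Z, X' Z -> isometric_copies d X Z) -> sFDC_family d X'.
Proof.
  intros HX HX' R_ Hpos Hinc.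
  destruct (HX R_ Hpos Hinc) as [n [F [F0 [Hdec Hub]]]].
  set (F' i := match i with O => X' | S j => isometric_copies d (F (S j)) end).
  assert (HF' : forall i Z, F' i Z -> isometric_copies d (F i) Z).
  { intros [|i] Z H; [rewrite F0; auto | exact H]. }
  exists n, F'. split; [reflexivity|split].
  - intros i Hi Z HZ. apply (r_decomposable_isometric_copies (R_ i) (F i) (F (S i))); auto.
  - destruct (uniformly_bounded_isometric_copies (F n) Hub) as [C HC].
    exists C. intros Z HZ. apply HC, HF', HZ.
Qed.

End IsometricCopies.

Lemma sFDC_of_empty {T : Type} (d : T -> T -> R) : (T -> False) -> sFDC d.
Proof.
  intros Hempty R_ _ _. exists 0%nat, (fun _ => fun Z => Z = fun _ => True).
  split; [reflexivity|split; [intros; lia|]].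
  exists 0. intros. exfalso; auto.
Qed.

(* A decomposition sequence may be stopped at any family that itself has sFDC,
   whose decompositions then continue with the remaining radii. *)
Lemma sFDC_family_of_sFDC_stage {T : Type} (d : T -> T -> R) (X : Defs.family T) :
  (forall R_, admissible_radii R_ ->
   exists n F, F 0%nat = X /\
     (forall i, (i < n)%nat -> r_decomposable d (R_ i) (F i) (F (S i))) /\
     sFDC_family d (F n)) ->
  sFDC_family d X.
Proof.
  intros Hstage. apply sFDC_familyP. intros R_ [Hpos Hinc].
  destruct (Hstage R_ (conj Hpos Hinc)) as [n [F [F0 [Fdec Fn]]]].
  destruct (Fn (fun j => R_ (n + j)%nat)) as [m [G [G0 [Gdec Gub]]]].
  { intros; apply Hpos. }
  { intros j; replace (n + S j)%nat with (S (n + j)) by lia; apply Hinc. }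
  set (H i := if Nat.ltb i n then F i else G (i - n)%nat).
  assert (Hlow : forall i, (i <= n)%nat -> H i = F i).
  { intros i Hi; unfold H. destruct (Nat.ltb_spec i n); [reflexivity|].
    replace i with n by lia. rewrite Nat.sub_diag, G0. reflexivity. }
  assert (Hhigh : forall j, H (n + j)%nat = G j).
  { intros j; unfold H. destruct (Nat.ltb_spec (n + j) n); [lia|].
    f_equal; lia. }
  exists (n + m)%nat, H. split; [|split].
  - rewrite Hlow by lia. exact F0.
  - intros i Hi. destruct (Nat.lt_ge_cases i n).
    + rewrite !Hlow by lia. auto.
    + replace i with (n + (i - n))%nat by lia.
      rewrite <- Nat.add_succ_r, !Hhigh. apply Gdec. lia.
  - rewrite Hhigh. exact Gub.
Qed.

Section Pullback.

Variables (E B : Type) (dE : E -> E -> R) (dB : B -> B -> R) (f : E -> B) (rho : R -> R).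
Hypothesis dE_nonneg : forall x y, 0 <= dE x y.
Hypothesis rho_monotone : forall s t, 0 <= s -> s <= t -> rho s <= rho t.
Hypothesis f_controlled : forall x x', dB (f x) (f x') <= rho (dE x x').

Lemma r_disjoint_union_preimage r s Y Zi P :
  rho (r + 1) < s ->
  r_disjoint_union_over dB s Y Zi P ->
  r_disjoint_union_over dE r (preimage_family f Y) (preimage f Zi) (preimage_family f P).
Proof.
  intros Hrs [Hcover [Hpieces Hsep]]. split; [|split].
  - intros x; unfold preimage; split.
    + intros HZ. apply Hcover in HZ. destruct HZ as [C [HC HCx]].
      exists (preimage f C). split; [exists C; auto | exact HCx].
    + intros [A [[C [HC ->]] HCx]]. apply Hcover. exists C; auto.
  - intros A [C [HC ->]]. exists C; auto.
  - intros A A' [C [HC ->]] [C' [HC' ->]] Hne.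
    assert (HCC' : C <> C') by (intro; subst; apply Hne; reflexivity).
    destruct (Hsep C C' HC HC' HCC') as [s' [Hs Hs']].
    exists (r + 1); split; [lra|]. intros a b Ha Hb.
    destruct (Rle_or_lt (r + 1) (dE a b)) as [Hl|Hl]; auto.
    pose proof (Hs' _ _ Ha Hb). pose proof (f_controlled a b).
    pose proof (rho_monotone (dE a b) (r + 1) (dE_nonneg a b) (Rlt_le _ _ Hl)). lra.
Qed.

Lemma r_decomposable_preimage r s Y Y' :
  rho (r + 1) < s ->
  r_decomposable dB s Y Y' ->
  r_decomposable dE r (preimage_family f Y) (preimage_family f Y').
Proof.
  intros Hrs Hdec Z [D [HD ->]].
  destruct (Hdec D HD) as [Z0 [Z1 [P0 [P1 [Hcover [H0 H1]]]]]].
  exists (preimage f Z0), (preimage f Z1), (preimage_family f P0), (preimage_family f P1).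
  split; [|split; eapply r_disjoint_union_preimage; eauto].
  intros x; unfold preimage; apply Hcover.
Qed.

End Pullback.

Lemma preimage_family_whole {E B : Type} (f : E -> B) :
  preimage_family f (fun Z => Z = fun _ => True) = (fun Z => Z = fun _ : E => True).
Proof.
  apply functional_extensionality; intro Z. apply propositional_extensionality. split.
  - intros [D [-> ->]]. reflexivity.
  - intros ->. exists (fun _ => True). split; reflexivity.
Qed.

Lemma admissible_radii_expand (rho : R -> R) (R_ : nat -> R) :
  (forall t, 0 <= t -> 0 <= rho t) ->
  (forall s t, 0 <= s -> s <= t -> rho s <= rho t) ->
  admissible_radii R_ -> admissible_radii (fun i => rho (R_ i + 1) + R_ i + 1).
Proof.
  intros Hnn Hmono [Hpos Hinc]. split; intros i.
  - pose proof (Hpos i). pose proof (Hnn (R_ i + 1) ltac:(lra)). lra.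
  - pose proof (Hpos i). pose proof (Hinc i).
    pose proof (Hmono (R_ i + 1) (R_ (S i) + 1) ltac:(lra) ltac:(lra)). lra.
Qed.

Lemma homogeneous_preimage_into_ball {E B : Type} (dE : E -> E -> R) (dB : B -> B -> R)
  (f : E -> B) (e0 : E) (b0 : B) (C r : R) (D : B -> Prop) :
  is_metric dB -> homogeneous dE dB f ->
  dB b0 (f e0) + C < r ->
  (forall x y, D x -> D y -> dB x y <= C) ->
  isometric_copies dE (fun Z => Z = preimage f (ball dB b0 r)) (preimage f D).
Proof.
  intros [_ [_ [_ Btri]]] Hhom Hr HD.
  destruct (classic (exists x1, D (f x1))) as [[x1 Hx1]|Hno].
  - destruct (Hhom (f x1) (f e0) (ex_intro _ x1 eq_refl) (ex_intro _ e0 eq_refl))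
      as [phi [phib [[Hphi _] [[Hphib _] [Hcomm Hb]]]]].
    exists (preimage f (ball dB b0 r)), phi. split; [reflexivity|split; [exact Hphi|]].
    intros x Hx. unfold preimage, ball. rewrite Hcomm.
    assert (Hnear : dB (f e0) (phib (f x)) <= C).
    { rewrite <- Hb, Hphib. apply HD; auto. }
    pose proof (Btri b0 (f e0) (phib (f x))). lra.
  - exists (preimage f (ball dB b0 r)), (fun x => x).
    split; [reflexivity|split; [intros ? ?; reflexivity|]].
    intros x Hx. exfalso. apply Hno. exists x. exact Hx.
Qed.

Lemma sFDC_of_fibred_over_balls (E B : Type) (dE : E -> E -> R) (dB : B -> B -> R)
  (f : E -> B) :
  is_metric dE -> is_metric dB ->
  uniformly_expansive dE dB f -> homogeneous dE dB f ->
  sFDC dB ->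
  (exists b0 : B, forall r, 0 < r -> sFDC_subspace dE (preimage f (ball dB b0 r))) ->
  sFDC dE.
Proof.
  intros [dE_nonneg _] mB [rho [rho_nonneg [rho_monotone f_controlled]]] Hhom HB [b0 Hballs].
  destruct (classic (exists e0 : E, True)) as [[e0 _]|HE].
  2:{ apply sFDC_of_empty. intro e; apply HE; exists e; auto. }
  apply sFDC_family_of_sFDC_stage. intros R_ HR.
  destruct (proj1 (sFDC_familyP dB _) HB _
              (admissible_radii_expand rho R_ rho_nonneg rho_monotone HR))
    as [n [FB [FB0 [FBdec [C HC]]]]].
  exists n, (fun i => preimage_family f (FB i)). split; [|split].
  - rewrite FB0. apply preimage_family_whole.
  - intros i Hi. apply (r_decomposable_preimage E B dE dB f rho dE_nonneg rho_monotone
      f_controlled (R_ i) (rho (R_ i + 1) + R_ i + 1)); auto.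
    pose proof (proj1 HR i). lra.
  - set (r := dB b0 (f e0) + Rabs C + 1).
    assert (Hr : 0 < r).
    { unfold r. pose proof (proj1 mB b0 (f e0)). pose proof (Rabs_pos C). lra. }
    apply (sFDC_family_isometric_copies E dE _ _ (Hballs r Hr)).
    intros Z [D [HD ->]]. apply (homogeneous_preimage_into_ball dE dB f e0 b0 C); auto.
    + pose proof (Rle_abs C). unfold r. lra.
    + apply HC, HD.
Qed.

Lemma ball_bounded {T : Type} (d : T -> T -> R) (b0 : T) (r : R) :
  is_metric d -> bounded_set d (ball d b0 r).
Proof.
  intros [_ [_ [dsym dtri]]]. exists (2 * r). intros x y Hx Hy. unfold ball in *.
  pose proof (dtri x b0 y). rewrite (dsym x b0) in *. lra.
Qed.

Theorem theorem5p3 (E B : Type) (dE : E -> E -> R) (dB : B -> B -> R)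
  (f : E -> B) :
  is_metric dE -> is_metric dB ->
  uniformly_expansive dE dB f -> homogeneous dE dB f ->
  (sFDC dB ->
   (exists b0 : B, forall r, 0 < r -> sFDC_subspace dE (preimage f (ball dB b0 r))) ->
   sFDC dE) /\
  (sFDC dB ->
   (forall D : B -> Prop, bounded_set dB D -> sFDC_subspace dE (preimage f D)) ->
   sFDC dE).
Proof.
  intros mE mB Hue Hhom. split.
  - apply sFDC_of_fibred_over_balls; auto.
  - intros HB Hbounded. destruct (classic (inhabited B)) as [[b0]|HnB].
    + apply (sFDC_of_fibred_over_balls E B dE dB f); auto.
      exists b0. intros r _. apply Hbounded, ball_bounded, mB.
    + apply sFDC_of_empty. intro e. apply HnB. exact (inhabits (f e)).
Qed.
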